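(* Let $I$ be a proper ideal of $\mathbb{C}[\mathrm{GL}_n]$ and $Y = V(I)$. For $P(t),Q(t)\in\mathrm{GL}_n(\mathcal{R})$ let $Y_{P(t),Q(t)} = V(\Psi_{P(t),Q(t)}(I))\subset(\overline{\mathcal{K}}^* )^n$. Then \[\mathrm{strop}(Y) = \overline{\bigcup_{(P(t),Q(t))\in\mathrm{GL}_n(\mathcal{R})\times\mathrm{GL}_n(\mathcal{R})}\mathrm{trop}(Y_{P(t),Q(t)})}.\]
   Context: $\mathbb{C}[\mathrm{GL}_n]$ is the ring of regular functions on $\mathrm{GL}_n(\mathbb{C})$. $\overline{\mathcal{K}}$ is the field of complex Puiseux series with valuation $\mathrm{val}(\sum a_qt^q) = \min\{q:a_q\ne0\}$; $\mathcal{R} = \{z:\mathrm{val}(z)\ge0\}$. For $f\in\mathbb{C}[\mathrm{GL}_n]$ and $P(t),Q(t)\in\mathrm{GL}_n(\mathcal{R})$, $\Psi_{P(t),Q(t)}(f)$ is the Laurent polynomial over $\overline{\mathcal{K}}$ given by $z(t)\mapsto f(P(t)\,\mathrm{diag}(z(t))\,Q(t)^{-1})$, and $\Psi_{P,Q}(I) = \{\Psi_{P,Q}(f):f\in I\}$; $V(\cdot)\subset(\overline{\mathcal{K}}^* )^n$ is the common zero set. For $Z\subset(\overline{\mathcal{K}}^* )^n$, $\mathrm{trop}(Z)$ is the closure in $\mathbb{R}^n$ of $\{(\mathrm{val}(z_1),\dots,\mathrm{val}(z_n)) : z\in Z\}$. Every $A(t)\in\mathrm{GL}_n(\overline{\mathcal{K}})$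 factors as $P(t)\,\mathrm{diag}(z(t))\,Q(t)^{-1}$ with $P,Q\in\mathrm{GL}_n(\mathcal{R})$, the multiset $\{\mathrm{val}(z_i(t))\}$ being independent of the choice; $\mathrm{sval}(A(t))$ is this multiset in $\mathbb{Q}^n/\mathcal{S}_n$. $Y(\overline{\mathcal{K}})$ is the set of $A(t)\in\mathrm{GL}_n(\overline{\mathcal{K}})$ on which all $f\in I$ vanish, and $\mathrm{strop}(Y)$ is the closure in $\mathbb{R}^n$ of the set of $x\in\mathbb{Q}^n$ whose $\mathcal{S}_n$-orbit equals $\mathrm{sval}(A(t))$ for some $A(t)\in Y(\overline{\mathcal{K}})$. *)

From HB Require Import structures.
From mathcomp Require Import all_boot all_order all_algebra.
From mathcomp Require Import reals.
From mathcomp Require Import complex.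
From mathcomp Require Import mpoly.
Set Implicit Arguments.
Unset Strict Implicit.
Unset Printing Implicit Defensive.
Import Order.TTheory GRing.Theory Num.Theory.
Local Open Scope ring_scope.

(* The coordinate ring C[GL_n] is presented as C[x_ij, y] / (det(x) y - 1). *)
(* An ideal of C[GL_n] is the same as an ideal J of C[x,y] containing      *)
(* det(x) y - 1; it is proper iff 1 \notin J.                              *)

Definition GLpoly (R : realType) (n : nat) := {mpoly R[i][n * n + 1]}.

Definition Xmat (R : realType) (n : nat) : 'M[GLpoly R n]_n :=
  \matrix_(i, j) 'X_(lshift 1 (mxvec_index i j)).

Definition Yvar (R : realType) (n : nat) : GLpoly R n :=
  'X_(rshift (n * n) (ord0 : 'I_1)).

Definition detrel (R : realType) (n : nat) : GLpoly R n :=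
  \det (Xmat R n) * Yvar R n - 1.

Definition is_ideal (A : comNzRingType) (J : A -> Prop) : Prop :=
  [/\ J 0, (forall p q, J p -> J q -> J (p + q)) & (forall r p, J p -> J (r * p))].

Definition glpoint (K : fieldType) (n : nat) (A : 'M[K]_n) : 'I_(n * n + 1) -> K :=
  fun k => match split k with
           | inl k' => mxvec A 0 k'
           | inr _ => (\det A)^-1
           end.

Definition evalGL (R : realType) (K : fieldType) (iota : {rmorphism R[i] -> K})
  (n : nat) (p : GLpoly R n) (A : 'M[K]_n) : K :=
  (map_mpoly iota p).@[glpoint A].

(* Valued field standing in for the complex Puiseux series.   *)
(* val : K -> rat, only meaningful on nonzero elements (val 0 = +oo).     *)
Definition puiseux_like_valuation (R : realType) (K : fieldType)
  (iota : {rmorphism R[i] -> K}) (val : K -> rat) : Prop :=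
  [/\ (forall x y : K, x != 0 -> y != 0 -> val (x * y) = val x + val y),
      (forall x y : K, x != 0 -> y != 0 -> x + y != 0 ->
          Num.min (val x) (val y) <= val (x + y)),
      (forall c : R[i], c != 0 -> val (iota c) = 0)
    & (forall q : rat, exists x : K, x != 0 /\ val x = q)].

(* the valuation ring R = {z : val z >= 0} (0 included, val 0 = +oo) *)
Definition inValRing (K : fieldType) (val : K -> rat) (x : K) : Prop :=
  x = 0 \/ 0 <= val x.

Definition inGLR (K : fieldType) (val : K -> rat) (n : nat) (M : 'M[K]_n) : Prop :=
  [/\ forall i j, inValRing val (M i j), \det M != 0 & inValRing val (\det M)^-1].

Definition diagz (K : fieldType) (n : nat) (z : 'I_n -> K) : 'M[K]_n :=
  diag_mx (\row_i z i).

Definition Ypoints (R : realType) (K : fieldType) (iota : {rmorphism R[i] -> K})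
  (n : nat) (J : GLpoly R n -> Prop) (A : 'M[K]_n) : Prop :=
  \det A != 0 /\ forall p, J p -> evalGL iota p A = 0.

(* Y_{P,Q} = V(Psi_{P,Q}(I)) in (K^x)^n : the Laurent polynomial
   Psi_{P,Q}(f) is z |-> f(P diag(z) Q^-1). *)
Definition YPQ (R : realType) (K : fieldType) (iota : {rmorphism R[i] -> K})
  (n : nat) (J : GLpoly R n -> Prop) (P Q : 'M[K]_n) (z : 'I_n -> K) : Prop :=
  (forall i, z i != 0) /\
  forall p, J p -> evalGL iota p (P *m diagz z *m invmx Q) = 0.

Definition Rclosure (R : realType) (n : nat) (S : ('I_n -> R) -> Prop)
  (x : 'I_n -> R) : Prop :=
  forall e : R, 0 < e -> exists y, S y /\ forall i, `|x i - y i| < e.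

Definition trop (R : realType) (K : fieldType) (val : K -> rat) (n : nat)
  (Z : ('I_n -> K) -> Prop) : ('I_n -> R) -> Prop :=
  Rclosure (fun y => exists z, Z z /\ forall i, y i = ratr (val (z i))).

(* q (a point of Q^n) has S_n-orbit equal to sval(A): the multiset of
   valuations of z in some factorization A = P diag(z) Q^-1, P,Q in GL_n(R)
   (this multiset is independent of the factorization). *)
Definition sval_is (K : fieldType) (val : K -> rat) (n : nat) (A : 'M[K]_n)
  (q : 'I_n -> rat) : Prop :=
  exists (P Q : 'M[K]_n) (z : 'I_n -> K),
    [/\ inGLR val P, inGLR val Q, (forall i, z i != 0),
        A = P *m diagz z *m invmx Q
      & perm_eq [seq val (z i) | i <- enum 'I_n] [seq q i | i <- enum 'I_n]].

Definition strop (R : realType) (K : fieldType) (iota : {rmorphism R[i] -> K})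
  (val : K -> rat) (n : nat) (J : GLpoly R n -> Prop) : ('I_n -> R) -> Prop :=
  Rclosure (fun y => exists q : 'I_n -> rat,
              (forall i, y i = ratr (q i)) /\
              exists A, Ypoints iota J A /\ sval_is val A q).

From HB Require Import structures.
From mathcomp Require Import all_boot all_order all_algebra.
From mathcomp Require Import reals.
From mathcomp Require Import complex.
From mathcomp Require Import mpoly.
From mathcomp Require Import fingroup perm.
Set Implicit Arguments.
Unset Strict Implicit.
Unset Printing Implicit Defensive.
Import Order.TTheory GRing.Theory Num.Theory.
Local Open Scope ring_scope.

(* A point A of Y with singular valuations q factors as A = P diag(z) Q^-1
   with P, Q in GL_n(R); permuting the columns of P and Q reorders z so that
   val(z_i) = q_i, and then z lies on Y_{P,Q}.  Conversely a point z of
   Y_{P,Q} gives the point P diag(z) Q^-1 of Y whose singular valuations are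
   the val(z_i).  Both sides are therefore closures of the same set of
   rational points, up to an inner closure on the right. *)

Section ValuationRing.

Variables (R : realType) (K : fieldType) (iota : {rmorphism R[i] -> K}).
Variable val : K -> rat.
Hypothesis hval : puiseux_like_valuation iota val.

Lemma inValRing_iotaMl (c : R[i]) (x : K) :
  c != 0 -> inValRing val x -> inValRing val (iota c * x).
Proof.
case: hval => valM _ val_iota _ c0.
have [->|x0] := eqVneq x 0; first by rewrite mulr0; left.
case=> [x0'|vx]; first by rewrite x0' eqxx in x0.
by right; rewrite valM ?fmorph_eq0 // val_iota // add0r.
Qed.

Lemma inGLR_mulmx_perm (n : nat) (P : 'M[K]_n) (s : 'S_n) :
  inGLR val P -> inGLR val (P *m perm_mx s).
Proof.
case=> entries detP detPV; split.
- by move=> i j; rewrite -[s]invgK -col_permE mxE.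
- by rewrite det_mulmx det_perm mulf_neq0 ?signr_eq0.
- have sign0 : ((-1) ^+ s : R[i]) != 0 by rewrite signr_eq0.
  rewrite det_mulmx det_perm mulrC invr_signM.
  by rewrite -(rmorph_sign iota); apply: inValRing_iotaMl.
Qed.

End ValuationRing.

Lemma invmxM (K : fieldType) (n : nat) (A B : 'M[K]_n) :
  A \in unitmx -> B \in unitmx -> invmx (A *m B) = invmx B *m invmx A.
Proof.
move=> uA uB; have uAB : A *m B \in unitmx by rewrite unitmx_mul uA uB.
rewrite -[RHS](mulKmx uAB) -mulmxA (mulmxA B) mulmxV // mul1mx mulmxV //.
by rewrite mulmx1.
Qed.

Lemma invmx_perm (K : fieldType) (n : nat) (s : 'S_n) :
  invmx (perm_mx s) = perm_mx s^-1 :> 'M[K]_n.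
Proof.
rewrite -[RHS](mulKmx (unitmx_perm _ s)) -perm_mxM mulgV perm_mx1.
by rewrite mulmx1.
Qed.

Lemma diagz_perm (K : fieldType) (n : nat) (z : 'I_n -> K) (s : 'S_n) :
  diagz z = perm_mx s^-1 *m diagz (z \o s) *m perm_mx s.
Proof.
rewrite -row_permE -[s in perm_mx s]invgK -col_permE.
by apply/matrixP => i j; rewrite !mxE /= permKV (inj_eq perm_inj).
Qed.

Lemma mulmx_diagz_perm (K : fieldType) (n : nat) (P Q : 'M[K]_n)
    (z : 'I_n -> K) (s : 'S_n) :
  Q \in unitmx ->
  P *m perm_mx s^-1 *m diagz (z \o s) *m invmx (Q *m perm_mx s^-1) =
  P *m diagz z *m invmx Q.
Proof.
move=> uQ; rewrite invmxM ?unitmx_perm // invmx_perm invgK (diagz_perm z s).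
by rewrite !mulmxA.
Qed.

Lemma perm_eq_map_enum (T : eqType) (n : nat) (f g : 'I_n -> T) :
  perm_eq [seq f i | i <- enum 'I_n] [seq g i | i <- enum 'I_n] ->
  exists s : 'S_n, g =1 f \o s.
Proof.
rewrite perm_sym => /(@tuple_permP _ _ _ [tuple f i | i < n]) [s gs].
exists s => i.
have /(congr1 (fun t => tnth t i)) : [tuple g i | i < n] =
    [tuple tnth [tuple f i | i < n] (s i) | i < n] by apply: val_inj.
by rewrite !tnth_mktuple.
Qed.

Section Closure.

Variables (R : realType) (n : nat).
Implicit Types (S T : ('I_n -> R) -> Prop) (x : 'I_n -> R).

Lemma Rclosure_sub S x : S x -> Rclosure S x.
Proof. by move=> Sx e e0; exists x; split=> // i; rewrite subrr normr0. Qed.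

Lemma Rclosure_mono S T x :
  (forall y, S y -> T y) -> Rclosure S x -> Rclosure T x.
Proof.
move=> ST Sx e e0; have [y [Sy xy]] := Sx e e0.
by exists y; split; [apply: ST|].
Qed.

Lemma Rclosure_idem S x : Rclosure (Rclosure S) x -> Rclosure S x.
Proof.
move=> Sx e e0; have e20 : 0 < e / 2 by rewrite divr_gt0.
have [y [Sy xy]] := Sx _ e20; have [w [Sw yw]] := Sy _ e20.
exists w; split=> // i; rewrite (splitr e).
by apply: le_lt_trans (ler_distD (y i) _ _) _; rewrite ltrD.
Qed.

End Closure.

Section SingularValuations.

Variables (R : realType) (K : fieldType) (iota : {rmorphism R[i] -> K}).
Variables (val : K -> rat) (n : nat) (J : GLpoly R n -> Prop).
Hypothesis hval : puiseux_like_valuation iota val.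

Lemma inGLR_unitmx (Q : 'M[K]_n) : inGLR val Q -> Q \in unitmx.
Proof. by case=> _ Q0 _; rewrite unitmxE unitfE. Qed.

Lemma Ypoints_YPQ (A : 'M[K]_n) (q : 'I_n -> rat) :
  Ypoints iota J A -> sval_is val A q ->
  exists P Q (z : 'I_n -> K),
    [/\ inGLR val P, inGLR val Q, YPQ iota J P Q z & forall i, val (z i) = q i].
Proof.
move=> [_ YA] [P [Q [z [GP GQ z0 defA /perm_eq_map_enum [s qs]]]]].
exists (P *m perm_mx s^-1), (Q *m perm_mx s^-1), (z \o s).
split.
- exact: (inGLR_mulmx_perm hval _ GP).
- exact: (inGLR_mulmx_perm hval _ GQ).
- split=> [i|p Jp]; first exact: z0.
  by rewrite mulmx_diagz_perm ?inGLR_unitmx // -defA YA.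
- by move=> i; rewrite qs.
Qed.

Lemma YPQ_Ypoints (P Q : 'M[K]_n) (z : 'I_n -> K) :
  inGLR val P -> inGLR val Q -> YPQ iota J P Q z ->
  Ypoints iota J (P *m diagz z *m invmx Q) /\
  sval_is val (P *m diagz z *m invmx Q) (fun i => val (z i)).
Proof.
move=> GP GQ [z0 Yz]; split; last by exists P, Q, z.
split=> //; rewrite !det_mulmx det_inv det_diag.
case: GP GQ => _ P0 _ [_ Q0 _].
rewrite !mulf_neq0 ?invr_eq0 //.
by apply/prodf_neq0 => i _; rewrite mxE.
Qed.

End SingularValuations.

Theorem mainTheorem17 (R : realType) (K : closedFieldType)
  (iota : {rmorphism R[i] -> K}) (val : K -> rat)
  (hval : puiseux_like_valuation iota val)
  (n : nat) (J : GLpoly R n -> Prop)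
  (hJ : is_ideal J) (hdet : J (detrel R n)) (hproper : ~ J 1) :
  forall x : 'I_n -> R,
    strop iota val J x <->
    Rclosure (fun y => exists P Q : 'M[K]_n,
                [/\ inGLR val P, inGLR val Q & trop val (YPQ iota J P Q) y]) x.
Proof.
move=> x; split.
- rewrite /strop; apply: Rclosure_mono => y [q [yq [A [YA svA]]]].
  have [P [Q [z [GP GQ Yz zq]]]] := Ypoints_YPQ hval YA svA.
  exists P, Q; split=> //; apply: Rclosure_sub.
  by exists z; split=> // i; rewrite yq zq.
- move=> Ux; apply: Rclosure_idem; apply: Rclosure_mono Ux.
  move=> y [P [Q [GP GQ]]]; apply: Rclosure_mono => w [z [Yz wz]].
  have [YA svA] := YPQ_Ypoints GP GQ Yz.
  exists (fun i => val (z i)); split=> //.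
  by eexists; split; [exact: YA | exact: svA].
Qed.
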